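(* Let $X$ be an affine variety and $\mathcal{A}\subseteq\mathcal{D}(X)$ a graded cofinite subalgebra. Then the base $A=\mathcal{A}\cap\mathcal{O}(X)$ is a finitely generated $\mathbb{C}$-algebra and $\mathcal{O}(X)$ is a finitely generated $A$-module. In other words, with $Y=\operatorname{Spec}A$, the morphism $X\to Y$ is a finite surjective morphism of affine varieties.
   Context: Varieties are over $\mathbb{C}$ and irreducible. $\mathcal{D}(X)$ is the algebra of ($\mathbb{C}$-linear, Grothendieck) differential operators on $\mathcal{O}(X)$, filtered by order, with commutative associated graded algebra $\overline{\mathcal{D}}(X)$ (whose degree-$0$ part is $\mathcal{O}(X)$). A subalgebra $\mathcal{A}$ has induced filtration $\mathcal{A}\cap\mathcal{D}(X)_{\le d}$ with associated graded $\overline{\mathcal{A}}\subseteq\overline{\mathcal{D}}(X)$; $\mathcal{A}$ is graded cofinite if $\overline{\mathcal{D}}(X)$ is a finitely generated $\overline{\mathcal{A}}$-module. *)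

From HB Require Import structures.
From mathcomp Require Import all_boot all_order all_algebra.
From mathcomp Require Import complex.
From mathcomp Require Import Rstruct.
Set Implicit Arguments. Unset Strict Implicit. Unset Printing Implicit Defensive.
Import Order.TTheory GRing.Theory Num.Theory.
Local Open Scope ring_scope.

Definition CC : Type := complex Rdefinitions.R.
HB.instance Definition _ := GRing.Field.on CC.

Section DiffOps.
Variable (R : comAlgType CC).

Definition clinear (P : R -> R) : Prop :=
  forall (c : CC) (x y : R), P (c *: x + y) = c *: P x + P y.

(* Grothendieck differential operators of order <= d on R:
   D_{<=0} = End_R(R);  D_{<=d+1} = {P C-linear | forall r, [P, r] in D_{<=d}}. *)
Fixpoint diffop_le (d : nat) (P : R -> R) : Prop :=
  clinear P /\
  match d with
  | 0 => forall r x : R, P (r * x) = r * P x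
  | d'.+1 => forall r : R, diffop_le d' (fun x => P (r * x) - r * P x)
  end.

(* D_{<= d-1}, with D_{<= -1} = 0. *)
Definition diffop_lt (d : nat) (P : R -> R) : Prop :=
  match d with
  | 0 => forall x, P x = 0
  | d'.+1 => diffop_le d' P
  end.

Definition diffop (P : R -> R) : Prop := exists d, diffop_le d P.

Definition subalg_diffop (A : (R -> R) -> Prop) : Prop :=
  [/\ forall P, A P -> diffop P,
      A (fun x => x),
      forall P Q, A P -> A Q -> A (fun x => P x + Q x),
      forall (c : CC) P, A P -> A (fun x => c *: P x)
    & forall P Q, A P -> A Q -> A (fun x => P (Q x))].

(* An element of
   gr D(X) = (+)_d D_{<=d}/D_{<=d-1} is represented by a finitely supported
   family F : nat -> (R -> R) with F d in D_{<=d}; two families represent the same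
   element iff F d - G d in D_{<=d-1} for all d. *)
Definition fin_supp (F : nat -> R -> R) : Prop :=
  exists N, forall d, (N <= d)%N -> forall x, F d x = 0.

Definition grD_elt (F : nat -> R -> R) : Prop :=
  fin_supp F /\ forall d, diffop_le d (F d).

(* Elements of gr(A) for the induced filtration A_{<=d} = A /\ D_{<=d};
   gr(A) embeds in gr D(X) since A_{<=d-1} = A_{<=d} /\ D_{<=d-1}. *)
Definition grA_elt (A : (R -> R) -> Prop) (F : nat -> R -> R) : Prop :=
  fin_supp F /\ forall d, A (F d) /\ diffop_le d (F d).

Definition gr_equiv (F G : nat -> R -> R) : Prop :=
  forall d, diffop_lt d (fun x => F d x - G d x).

Definition gr_mul (F G : nat -> R -> R) : nat -> R -> R :=
  fun k x => \sum_(i < k.+1) F i (G (k - i)%N x).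

(* A is graded cofinite: gr D(X) is a finitely generated gr(A)-module. *)
Definition graded_cofinite (A : (R -> R) -> Prop) : Prop :=
  exists (m : nat) (g : 'I_m -> nat -> R -> R),
    (forall i, grD_elt (g i)) /\
    forall F, grD_elt F ->
      exists a : 'I_m -> nat -> R -> R,
        (forall i, grA_elt A (a i)) /\
        gr_equiv F (fun k x => \sum_(i < m) gr_mul (a i) (g i) k x).

(* Base of A: A /\ O(X), elements r whose multiplication operator lies in A. *)
Definition base (A : (R -> R) -> Prop) (r : R) : Prop := A (fun x => r * x).

Definition in_gen_subalg (S : seq R) (r : R) : Prop :=
  forall P : R -> Prop,
    (forall s, s \in S -> P s) -> P 1 ->
    (forall x y, P x -> P y -> P (x + y)) ->
    (forall x y, P x -> P y -> P (x * y)) ->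
    (forall (c : CC) x, P x -> P (c *: x)) -> P r.

(* O(X) for an (irreducible) affine variety X: a finitely generated
   commutative C-algebra that is an integral domain. *)
Definition affine_domain : Prop :=
  [/\ (1 : R) != 0,
      forall x y : R, x * y = 0 -> x = 0 \/ y = 0
    & exists S : seq R, forall r, in_gen_subalg S r].

End DiffOps.

(* Comparing components of degree zero, gr D(X)_0 = O(X) is spanned over
   gr(A)_0 = A /\ O(X) by the degree-zero components t_i of finitely many
   generators of gr D(X) over gr(A) (operators of order 0 are multiplications),
   so O(X) is a finite module over the base.  The rest is the Artin-Tate lemma.
   The coefficients expressing the algebra generators of O(X) and the products
   t_i t_j in the t_i generate a subalgebra C of the base, noetherian by
   Hilbert's basis theorem, over which the t_i still span O(X).  Hence the base,
   a C-submodule of O(X), is a finite C-module, and it is generated as an algebra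
   by the generators of C together with those of this module. *)

From HB Require Import structures.
From mathcomp Require Import all_boot all_order all_algebra.
From mathcomp Require Import complex Rstruct zify.
From Stdlib Require Import Classical FunctionalExtensionality.
Import Order.TTheory GRing.Theory Num.Theory.
Local Open Scope ring_scope.
Set Implicit Arguments. Unset Strict Implicit. Unset Printing Implicit Defensive.

Section Span.
Variables (K : Type) (V : zmodType) (act : K -> V -> V).

Definition submod_pred (M : V -> Prop) : Prop :=
  [/\ M 0, forall a b, M a -> M b -> M (a + b) & forall k a, M a -> M (act k a)].

Definition gen_span (s : seq V) (x : V) : Prop :=
  forall M, submod_pred M -> (forall y, y \in s -> M y) -> M x.

Definition fin_gen (M : V -> Prop) : Prop :=
  exists2 s : seq V, (forall y, y \in s -> M y) & forall x, M x -> gen_span s x.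

Lemma submod_predI M N :
  submod_pred M -> submod_pred N -> submod_pred (fun x => M x /\ N x).
Proof.
move=> [M0 MD MA] [N0 ND NA]; split=> // [a b [Ma Na] [Mb Nb] | k a [Ma Na]].
  by split; [apply: MD | apply: ND].
by split; [apply: MA | apply: NA].
Qed.

Lemma gen_span_submod s : submod_pred (gen_span s).
Proof.
split=> [M [M0 _ _] _ // | a b ha hb M MM Ms | k a ha M MM Ms]; case: (MM) => _ MD MA.
  by apply: MD; [apply: ha | apply: hb].
by apply: MA; apply: ha.
Qed.

Lemma gen_span0 s : gen_span s 0.
Proof. by case: (gen_span_submod s). Qed.

Lemma gen_spanD s a b : gen_span s a -> gen_span s b -> gen_span s (a + b).
Proof. by case: (gen_span_submod s) => _ + _; apply. Qed.

Lemma gen_spanA s k a : gen_span s a -> gen_span s (act k a).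
Proof. by case: (gen_span_submod s) => _ _; apply. Qed.

Lemma gen_span_mem s y : y \in s -> gen_span s y.
Proof. by move=> ys M _; apply. Qed.

Lemma gen_span_sub s t x : {subset s <= t} -> gen_span s x -> gen_span t x.
Proof. by move=> st hx M MM Mt; apply: hx => // y /st /Mt. Qed.

End Span.

Lemma gen_span_map_inv (K : Type) (U V : zmodType) (actU : K -> U -> U) (actV : K -> V -> V)
    (f : {additive U -> V}) (H : seq U) y :
  (forall k a, f (actU k a) = actV k (f a)) ->
  gen_span actV (map f H) y -> exists2 x, gen_span actU H x & f x = y.
Proof.
move=> fA hy; apply: (hy (fun y => exists2 x, gen_span actU H x & f x = y)); first split.
- by exists 0; rewrite ?raddf0 //; apply: gen_span0.
- move=> _ _ [a ha <-] [b hb <-].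
  by exists (a + b); rewrite ?raddfD //; apply: gen_spanD.
- by move=> k _ [a ha <-]; exists (actU k a); rewrite ?fA //; apply: gen_spanA.
- by move=> _ /mapP [x xH ->]; exists x => //; apply: gen_span_mem.
Qed.

Lemma gen_span_map_f (K : Type) (U V : zmodType) (actU : K -> U -> U) (actV : K -> V -> V)
    (f : U -> V) (H : seq U) x :
  f 0 = 0 -> {morph f : a b / a + b} -> (forall k a, f (actU k a) = actV k (f a)) ->
  gen_span actU H x -> gen_span actV (map f H) (f x).
Proof.
move=> f0 fD fA hx; apply: (hx (fun x => gen_span actV (map f H) (f x))).
  split=> [|a b|k a]; rewrite ?f0 ?fD ?fA; [exact: gen_span0 | exact: gen_spanD | exact: gen_spanA].
by move=> y yH; apply: gen_span_mem; apply: map_f.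
Qed.

Lemma seq_lift (T U : eqType) (f : U -> T) (Q : U -> Prop) (s : seq T) :
  (forall y, y \in s -> exists2 u, Q u & f u = y) ->
  exists2 H : seq U, (forall h, h \in H -> Q h) & map f H = s.
Proof.
elim: s => [|y s IH] hs; first by exists [::].
have [u Qu fu] := hs y (mem_head _ _).
have [z zs|H QH fH] := IH; first by apply: hs; rewrite in_cons zs orbT.
exists (u :: H); last by rewrite /= fu fH.
by move=> h; rewrite in_cons => /orP [/eqP -> | /QH].
Qed.

Definition noetherian (K : comNzRingType) : Prop :=
  forall I : K -> Prop, submod_pred *%R I -> fin_gen *%R I.

Lemma field_noetherian (F : fieldType) : noetherian F.
Proof.
move=> I _.
have [[x Ix x0] | Inull] := classic (exists2 x, I x & x != 0).
  exists [:: x] => [y | y _]; first by rewrite inE => /eqP ->.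
  by rewrite -(divfK x0 y); apply: gen_spanA; apply: gen_span_mem; apply: mem_head.
exists [::] => // y Iy.
have -> : y = 0 by apply: NNPP => /eqP y0; apply: Inull; exists y.
exact: gen_span0.
Qed.

Section PolySubmodules.
Variable K : nzRingType.

Lemma submod_pred_scale (M : {poly K} -> Prop) : submod_pred *%R M -> submod_pred *:%R M.
Proof. by move=> [M0 MD MA]; split=> // k p; rewrite -mul_polyC; apply: MA. Qed.

Lemma gen_span_scale_mul (G : seq {poly K}) p : gen_span *:%R G p -> gen_span *%R G p.
Proof.
by move=> hp; apply: hp (submod_pred_scale (gen_span_submod _ _)) _ => y; apply: gen_span_mem.
Qed.

Lemma size_leq_submod n : submod_pred *:%R (fun p : {poly K} => (size p <= n)%N).
Proof.
split=> [|p q sp sq|k p sp]; first by rewrite size_poly0.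
  by rewrite (leq_trans (size_polyD _ _)) // geq_max sp sq.
exact: leq_trans (size_scale_leq _ _) sp.
Qed.

Lemma size_sub_leq_top (p q : {poly K}) e :
  (size p <= e.+1)%N -> (size q <= e.+1)%N -> p`_e = q`_e -> (size (p - q)%R <= e)%N.
Proof.
move=> sp sq pq; apply/leq_sizeP => j; rewrite leq_eqVlt => /orP [/eqP <- | ltej].
  by rewrite coefB pq subrr.
have spq : (size (p - q)%R <= e.+1)%N.
  by rewrite (leq_trans (size_polyD _ _)) // size_polyN geq_max sp sq.
exact: (leq_sizeP _ _ spq).
Qed.

Lemma coef_shift (p : {poly K}) d e :
  (d <= e)%N -> ('X^(e - d) * p)`_e = p`_d.
Proof. by move=> de; rewrite coefXnM ltnNge leq_subr subKn. Qed.

Lemma size_shift_leq (p : {poly K}) d e :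
  (size p <= d.+1)%N -> (d <= e)%N -> (size ('X^(e - d) * p)%R <= e.+1)%N.
Proof.
move=> sp de; apply/leq_sizeP => j ej; rewrite coefXnM; case: ifP => // _.
apply: (leq_sizeP _ _ sp); lia.
Qed.

End PolySubmodules.

Lemma fin_gen_bounded_polys (K : comNzRingType) : noetherian K ->
  forall n (M : {poly K} -> Prop), submod_pred *:%R M ->
  (forall p, M p -> (size p <= n)%N) -> fin_gen *:%R M.
Proof.
move=> NK; elim=> [|n IH] M Msub Msz.
  exists [::] => // p /Msz; rewrite leqn0 size_poly_eq0 => /eqP ->; exact: gen_span0.
have [M0 MD MZ] := Msub.
pose L c := exists2 p, M p & p`_n = c.
have Lideal : submod_pred *%R L.
  split; first by exists 0; rewrite ?coef0.
    by move=> _ _ [p Mp <-] [q Mq <-]; exists (p + q); [exact: MD | exact: coefD].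
  by move=> k _ [p Mp <-]; exists (k *: p); [exact: MZ | exact: coefZ].
have [s sL sspan] := NK L Lideal.
have [H HM Hs] := seq_lift (f := coefp n) sL.
have [|G' G'M G'span] := IH _ (submod_predI Msub (size_leq_submod K n)); first by move=> p [].
exists (H ++ G') => [g | p Mp]; first by rewrite mem_cat => /orP [/HM | /G'M []].
have [h hH hn] : exists2 h, gen_span *:%R H h & h`_n = p`_n.
  apply: (gen_span_map_inv (f := coefp n)) => [k q | ]; first exact: coefZ.
  by rewrite Hs; apply: sspan; exists p.
have Mh : M h by apply: hH.
have Mph : M (p - h) by rewrite -scaleN1r; apply: MD => //; apply: MZ.
have sph : (size (p - h)%R <= n)%N by apply: size_sub_leq_top; rewrite ?Msz.
rewrite -(subrK h p); apply: gen_spanD.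
  by apply: (gen_span_sub (s := G')) (G'span _ _) => // y; rewrite mem_cat orbC => ->.
by apply: gen_span_sub hH => y; rewrite mem_cat => ->.
Qed.

Section LeadingIdeal.
Variables (K : comNzRingType) (I : {poly K} -> Prop).
Hypothesis I_ideal : submod_pred *%R I.

Definition lead_ideal_at d (c : K) : Prop :=
  exists2 p, I p /\ (size p <= d.+1)%N & p`_d = c.

Definition lead_ideal (c : K) : Prop := exists d, lead_ideal_at d c.

Lemma lead_ideal_at_mono d e c : (d <= e)%N -> lead_ideal_at d c -> lead_ideal_at e c.
Proof.
have [_ _ IM] := I_ideal.
move=> de [p [Ip sp] <-]; exists ('X^(e - d) * p); last exact: coef_shift.
by split; [apply: IM | apply: size_shift_leq].
Qed.

Lemma lead_ideal_at_submod e : submod_pred *%R (lead_ideal_at e).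
Proof.
have [I0 ID IM] := I_ideal; split.
- by exists 0; rewrite ?size_poly0 ?coef0.
- move=> _ _ [p [Ip sp] <-] [q [Iq sq] <-]; exists (p + q); last exact: coefD.
  by have [_ sD _] := size_leq_submod K e.+1; split; [apply: ID | apply: sD].
- move=> k _ [p [Ip sp] <-]; exists (k%:P * p); last by rewrite coefCM.
  have [_ _ sZ] := size_leq_submod K e.+1.
  by split; [apply: IM | rewrite mul_polyC; apply: sZ].
Qed.

Lemma lead_ideal_submod : submod_pred *%R lead_ideal.
Proof.
split.
- by exists 0%N; have [] := lead_ideal_at_submod 0.
- move=> a b [d ha] [d' hb]; exists (maxn d d').
  have [_ tD _] := lead_ideal_at_submod (maxn d d').
  by apply: tD; [apply: lead_ideal_at_mono ha | apply: lead_ideal_at_mono hb];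
    rewrite ?leq_maxl ?leq_maxr.
- by move=> k a [d ha]; exists d; have [_ _ tZ] := lead_ideal_at_submod d; apply: tZ.
Qed.

Lemma lead_ideal_common_degree (s : seq K) :
  (forall y, y \in s -> lead_ideal y) -> exists N, forall y, y \in s -> lead_ideal_at N y.
Proof.
elim: s => [|y s IH] hs; first by exists 0%N.
have [z zs|N HN] := IH; first by apply: hs; rewrite in_cons zs orbT.
have [d hy] := hs y (mem_head _ _).
exists (maxn N d) => z; rewrite in_cons => /orP [/eqP -> | /HN].
  exact: lead_ideal_at_mono (leq_maxr _ _) hy.
exact: lead_ideal_at_mono (leq_maxl _ _).
Qed.

Lemma lead_ideal_lift N (H G : seq {poly K}) e c :
  (forall h, h \in H -> I h /\ (size h <= N.+1)%N) ->
  (forall h, h \in H -> gen_span *%R G h) ->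
  (N <= e)%N -> gen_span *%R (map (coefp N) H) c ->
  exists2 h, gen_span *%R G h & [/\ I h, (size h <= e.+1)%N & h`_e = c].
Proof.
move=> HI HG Ne.
have -> : map (coefp N) H = map (coefp e) [seq 'X^(e - N) * h | h <- H].
  by rewrite -map_comp; apply/eq_in_map => h _ /=; rewrite coef_shift.
move=> /(gen_span_map_inv (actU := *:%R)) [k q | h hspan <-]; first exact: coefZ.
have [_ _ IM] := I_ideal.
exists h; first apply: hspan (submod_pred_scale (gen_span_submod _ _)) _.
  by move=> _ /mapP [q qH ->]; apply: gen_spanA; apply: HG.
split=> //.
  apply: hspan (submod_pred_scale I_ideal) _ => _ /mapP [q qH ->].
  by apply: IM; have [] := HI q qH.
apply: hspan (size_leq_submod K e.+1) _ => _ /mapP [q qH ->].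
by apply: size_shift_leq => //; have [] := HI q qH.
Qed.

End LeadingIdeal.

Theorem noetherian_poly (K : comNzRingType) : noetherian K -> noetherian {poly K}.
Proof.
move=> NK I Iideal.
have [s stop sspan] := NK _ (lead_ideal_submod Iideal).
have [N sN] := lead_ideal_common_degree Iideal stop.
have [H HI Hs] := seq_lift (f := coefp N) sN.
have [|G GI Gspan] := fin_gen_bounded_polys NK (n := N.+1)
    (submod_predI (submod_pred_scale Iideal) (size_leq_submod K N.+1)); first by move=> p [].
have low_degree p : I p -> (size p <= N.+1)%N -> gen_span *%R G p.
  by move=> Ip sp; apply: gen_span_scale_mul; apply: Gspan.
exists G => [g /GI [] // | p Ip].
have [e sp] : exists e, (size p <= e.+1)%N by exists (size p).
elim: e p sp Ip => [|e IH] p sp Ip; first by apply: low_degree => //; apply: leq_trans sp _.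
have [eN|Ne] := leqP e.+1 N; first by apply: low_degree => //; apply: leq_trans sp _.
have sH h : h \in H -> gen_span *%R G h by move=> /HI [Ih sh]; apply: low_degree.
have pe : gen_span *%R (map (coefp N) H) p`_e.+1 by rewrite Hs; apply: sspan; exists e.+1, p.
have [h hG [Ih sh he]] := lead_ideal_lift Iideal HI sH (ltnW Ne) pe.
have [_ ID IM] := Iideal.
have Iph : I (p - h) by rewrite -mulN1r; apply: ID => //; apply: IM.
rewrite -(subrK h p); apply: gen_spanD => //.
by apply: IH => //; apply: size_sub_leq_top.
Qed.

Section CoefSpan.
Variables (P R : comNzRingType) (phi : {rmorphism P -> R}) (n : nat) (t : 'I_n -> R).

Definition coef_span (x : R) : Prop := exists c : 'I_n -> P, x = \sum_(i < n) phi (c i) * t i.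

Lemma coef_spanD x y : coef_span x -> coef_span y -> coef_span (x + y).
Proof.
move=> [c ->] [c' ->]; exists (fun i => c i + c' i); rewrite -big_split.
by apply: eq_bigr => i _; rewrite rmorphD mulrDl.
Qed.

Lemma coef_span_mull k x : coef_span x -> coef_span (phi k * x).
Proof.
move=> [c ->]; exists (fun i => k * c i); rewrite mulr_sumr.
by apply: eq_bigr => i _; rewrite rmorphM mulrA.
Qed.

Lemma coef_spanM x y : (forall i j, coef_span (t i * t j)) ->
  coef_span x -> coef_span y -> coef_span (x * y).
Proof.
move=> tt [c ->] [c' ->].
have [e He] := fin_all_exists (fun i => fin_all_exists (tt i)).
exists (fun l => \sum_(i < n) \sum_(j < n) c i * c' j * e i j l).
rewrite mulr_suml.
transitivity (\sum_(i < n) \sum_(j < n) \sum_(l < n) phi (c i * c' j * e i j l) * t l).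
  apply: eq_bigr => i _; rewrite mulr_sumr; apply: eq_bigr => j _.
  rewrite mulrACA He mulr_sumr; apply: eq_bigr => l _.
  by rewrite !rmorphM !mulrA.
under eq_bigr do rewrite exchange_big.
rewrite exchange_big; apply: eq_bigr => l _.
rewrite rmorph_sum mulr_suml; apply: eq_bigr => i _.
by rewrite rmorph_sum mulr_suml.
Qed.

(* [P^n] is modelled by the polynomials of size at most [n], which [psi] maps onto
   the span of [t]. *)
Lemma noetherian_coef_span_submod (M : R -> Prop) : noetherian P ->
  submod_pred (fun k x => phi k * x) M -> (forall x, M x -> coef_span x) ->
  fin_gen (fun k x => phi k * x) M.
Proof.
move=> NP [M0 MD MA] Mspan.
pose psi (p : {poly P}) := \sum_(i < n) phi p`_i * t i.
have psi0 : psi 0 = 0 by rewrite /psi big1 // => i _; rewrite coef0 rmorph0 mul0r.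
have psiD : {morph psi : p q / p + q}.
  by move=> p q; rewrite /psi -big_split; apply: eq_bigr => i _; rewrite coefD rmorphD mulrDl.
have psiZ k p : psi (k *: p) = phi k * psi p.
  by rewrite /psi mulr_sumr; apply: eq_bigr => i _; rewrite coefZ rmorphM mulrA.
have Psub : submod_pred *:%R (fun p : {poly P} => (size p <= n)%N /\ M (psi p)).
  apply: submod_predI (size_leq_submod P n) _.
  by split=> [|p q|k p]; rewrite ?psi0 ?psiD ?psiZ //; [apply: MD | apply: MA].
have [|G GM Gspan] := fin_gen_bounded_polys NP (n := n) Psub; first by move=> p [].
exists (map psi G) => [_ /mapP [g /GM [_ ?] ->] // | x Mx].
have [c xc] := Mspan x Mx.
pose p : {poly P} := \poly_(j < n) (if insub j is Some i then c i else 0).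
have xp : x = psi p by rewrite xc; apply: eq_bigr => i _; rewrite coef_poly ltn_ord valK.
rewrite xp; apply: gen_span_map_f => //; apply: Gspan.
by split; [apply: size_poly | rewrite -xp].
Qed.

End CoefSpan.

Fixpoint ipoly (k : nat) : comNzRingType :=
  if k is k'.+1 then {poly ipoly k'} : comNzRingType else CC : comNzRingType.

Lemma noetherian_ipoly k : noetherian (ipoly k).
Proof. by elim: k => [|k IH] /=; [apply: (@field_noetherian CC) | apply: noetherian_poly]. Qed.

Section Subalgebras.
Variable R : comAlgType CC.

Definition subalg_pred (B : R -> Prop) : Prop :=
  [/\ B 1, forall x y, B x -> B y -> B (x + y), forall x y, B x -> B y -> B (x * y)
    & forall (c : CC) x, B x -> B (c *: x)].

Lemma in_gen_subalg_min (B : R -> Prop) (S : seq R) r : subalg_pred B ->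
  (forall s, s \in S -> B s) -> in_gen_subalg S r -> B r.
Proof. by move=> [B1 BD BM BZ] BS; apply. Qed.

Lemma in_gen_subalg_subalg (S : seq R) : subalg_pred (in_gen_subalg S).
Proof.
split=> [P _ P1 _ _ _ // | x y hx hy | x y hx hy | c x hx] P PS P1 PD PM PZ.
- by apply: (PD); [apply: hx | apply: hy].
- by apply: (PM); [apply: hx | apply: hy].
- by apply: (PZ); apply: hx.
Qed.

Lemma in_gen_subalg_mem (S : seq R) s : s \in S -> in_gen_subalg S s.
Proof. by move=> sS P PS _ _ _ _; apply: PS. Qed.

Lemma in_gen_subalg_sub (S T : seq R) r :
  {subset S <= T} -> in_gen_subalg S r -> in_gen_subalg T r.
Proof.
by move=> ST; apply: in_gen_subalg_min (in_gen_subalg_subalg T) _ => s /ST /in_gen_subalg_mem.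
Qed.

Lemma subalg_pred0 (B : R -> Prop) : subalg_pred B -> B 0.
Proof. by move=> [B1 _ _ BZ]; rewrite -(scale0r 1); apply: BZ. Qed.

Fixpoint ipoly_eval (bs : seq R) : {rmorphism ipoly (size bs) -> R} :=
  match bs with
  | [::] => GRing.in_alg R : {rmorphism CC -> R}
  | b :: bs' => horner_morph (fun a => mulrC b (ipoly_eval bs' a)) : {rmorphism _ -> R}
  end.

Lemma ipoly_eval_cons b bs p : ipoly_eval (b :: bs) p = (map_poly (ipoly_eval bs) p).[b].
Proof. by []. Qed.

Lemma ipoly_eval_mem bs b : b \in bs -> exists p, ipoly_eval bs p = b.
Proof.
elim: bs => [|c bs IH] //; rewrite in_cons => /orP [/eqP -> | /IH [p hp]].
  by exists 'X; rewrite ipoly_eval_cons map_polyX hornerX.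
by exists p%:P; rewrite ipoly_eval_cons map_polyC hornerC.
Qed.

Lemma ipoly_eval_scalar bs (c : CC) : exists p, ipoly_eval bs p = c%:A.
Proof.
elim: bs => [|b bs [p hp]]; first by exists c.
by exists p%:P; rewrite ipoly_eval_cons map_polyC hornerC.
Qed.

Lemma ipoly_eval_gen bs p : in_gen_subalg bs (ipoly_eval bs p).
Proof.
elim: bs p => [|b bs IH] p.
  by have [G1 _ _ GZ] := in_gen_subalg_subalg [::]; apply: GZ.
have [G1 GD GM _] := in_gen_subalg_subalg (b :: bs).
rewrite ipoly_eval_cons horner_coef.
apply: (big_ind (in_gen_subalg (b :: bs))) => [|x y|i _].
- exact: subalg_pred0 (in_gen_subalg_subalg _).
- exact: GD.
rewrite coef_map; apply: (GM).
  by apply: in_gen_subalg_sub (IH _) => z zs; rewrite in_cons zs orbT.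
elim: (nat_of_ord i) => [|j IHj]; first by rewrite expr0.
by rewrite exprS; apply: (GM) => //; apply: in_gen_subalg_mem; apply: mem_head.
Qed.

End Subalgebras.

Section ArtinTate.
Variables (R : comAlgType CC) (B : R -> Prop) (S0 : seq R) (n : nat) (t : 'I_n -> R).
Hypotheses (B_subalg : subalg_pred B) (S0_gen : forall r, in_gen_subalg S0 r).
Hypothesis t_gen :
  forall r, exists a : 'I_n -> R, (forall i, B (a i)) /\ r = \sum_(i < n) a i * t i.

Lemma finite_coef_seq (rs : seq R) : exists2 bs : seq R, (forall b, b \in bs -> B b) &
  forall x, x \in rs -> exists2 a : 'I_n -> R, (forall i, a i \in bs) & x = \sum_(i < n) a i * t i.
Proof.
elim: rs => [|x rs [bs bsB bs_coef]]; first by exists [::].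
have [a [aB ->]] := t_gen x.
exists (bs ++ [seq a i | i <- enum 'I_n]) => [b | y].
  by rewrite mem_cat => /orP [/bsB // | /mapP [i _ ->]].
rewrite in_cons => /orP [/eqP -> | /bs_coef [a' a'bs ->]].
  by exists a => // i; rewrite mem_cat map_f ?orbT ?mem_enum.
by exists a' => // i; rewrite mem_cat a'bs.
Qed.

Theorem artin_tate :
  exists S : seq R, (forall s, s \in S -> B s) /\ forall r, B r -> in_gen_subalg S r.
Proof.
pose rs := 1 :: S0 ++ [seq t i * t j | i <- enum 'I_n, j <- enum 'I_n].
have [bs bsB bs_coef] := finite_coef_seq rs.
pose phi := ipoly_eval bs.
have rs_span x : x \in rs -> coef_span phi t x.
  move=> /bs_coef [a abs ->].
  have [c hc] := fin_all_exists (fun i => ipoly_eval_mem (abs i)).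
  by exists c; apply: eq_bigr => i _; rewrite hc.
have span_all r : coef_span phi t r.
  apply: (S0_gen r (P := coef_span phi t)) => [s sS | | | | c x hx].
  - by apply: rs_span; rewrite in_cons mem_cat sS orbT.
  - exact/rs_span/mem_head.
  - exact: coef_spanD.
  - move=> x y; apply: coef_spanM => i j; apply: rs_span.
    by rewrite in_cons mem_cat (allpairs_f (fun i j => t i * t j)) ?mem_enum ?orbT.
  - have [p hp] := ipoly_eval_scalar bs c.
    by rewrite -mulr_algl -hp; apply: coef_span_mull.
have phiB p : B (phi p) := in_gen_subalg_min B_subalg bsB (ipoly_eval_gen (bs := bs) p).
have [_ BD BM _] := B_subalg.
have Bsub : submod_pred (fun k x => phi k * x) B.
  by split=> [|x y|k x Bx]; [exact: subalg_pred0 | exact: BD | apply: BM].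
have [G GB Gspan] :=
  noetherian_coef_span_submod (noetherian_ipoly (k := size bs)) Bsub (fun x _ => span_all x).
exists (bs ++ G); split=> [s | r Br]; first by rewrite mem_cat => /orP [/bsB | /GB].
have [_ GD GM _] := in_gen_subalg_subalg (bs ++ G).
apply: (Gspan r Br) => [|g gG]; last by apply: in_gen_subalg_mem; rewrite mem_cat gG orbT.
split=> [|x y|k x hx]; [exact: subalg_pred0 (in_gen_subalg_subalg _) | exact: GD |].
apply: GM hx; apply: in_gen_subalg_sub (ipoly_eval_gen (bs := bs) k) => z zbs.
by rewrite mem_cat zbs.
Qed.

End ArtinTate.

Section DifferentialOperators.
Variable R : comAlgType CC.

Lemma diffop_le_zero k : diffop_le k (fun _ : R => 0).
Proof.
elim: k => [|k IH]; (split; first by move=> c x y; rewrite scaler0 addr0).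
  by move=> r x; rewrite mulr0.
move=> r; rewrite (_ : (fun x => 0 - r * 0) = fun _ => 0) //.
by apply: functional_extensionality => x; rewrite mulr0 subrr.
Qed.

Lemma mulr_diffop_le0 (r : R) : diffop_le 0 (fun x => r * x).
Proof. by split=> [c x y | s x]; rewrite ?mulrDr ?scalerAr // mulrCA. Qed.

Lemma diffop_le0_mulE (P : R -> R) x : diffop_le 0 P -> P x = P 1 * x.
Proof. by move=> [_ PM]; rewrite -{1}(mulr1 x) PM mulrC. Qed.

Lemma base_subalg (A : (R -> R) -> Prop) : subalg_diffop A -> subalg_pred (base A).
Proof.
move=> [_ A1 AD AZ AM]; rewrite /base; split=> [|x y Ax Ay|x y Ax Ay|c x Ax].
- by rewrite (_ : (fun x => 1 * x) = id) //; apply: functional_extensionality => x; rewrite mul1r.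
- rewrite (_ : (fun z => (x + y) * z) = (fun z => x * z + y * z)); first exact: AD.
  by apply: functional_extensionality => z; rewrite mulrDl.
- rewrite (_ : (fun z => (x * y) * z) = (fun z => x * (y * z))); first exact: AM.
  by apply: functional_extensionality => z; rewrite mulrA.
- rewrite (_ : (fun z => (c *: x) * z) = (fun z => c *: (x * z))); first exact: AZ.
  by apply: functional_extensionality => z; rewrite scalerAl.
Qed.

Lemma base_diffop_le0 (A : (R -> R) -> Prop) (P : R -> R) :
  A P -> diffop_le 0 P -> base A (P 1).
Proof.
move=> AP P0; rewrite /base (_ : (fun x => P 1 * x) = P) //.
by apply: functional_extensionality => x; rewrite (diffop_le0_mulE x P0).
Qed.

Lemma graded_cofinite_fin_module (A : (R -> R) -> Prop) : graded_cofinite A ->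
  exists n (t : 'I_n -> R), forall r, exists a : 'I_n -> R,
    (forall i, base A (a i)) /\ r = \sum_(i < n) a i * t i.
Proof.
move=> [n [g [_ g_gen]]]; exists n, (fun i => g i 0%N 1) => r.
pose F (k : nat) (x : R) := if k is 0%N then r * x else 0.
have [|a [a_gr Fa]] := g_gen F.
  split; first by exists 1%N => -[|d].
  by case=> [|d]; [exact: mulr_diffop_le0 | exact: diffop_le_zero].
have a0 i : A (a i 0%N) /\ diffop_le 0 (a i 0%N) by have [_ /(_ 0%N)] := a_gr i.
exists (fun i => a i 0%N 1); split=> [i | ]; first by have [] := a0 i; apply: base_diffop_le0.
have /eqP := Fa 0%N 1; rewrite /F /gr_mul mulr1 subr_eq0 => /eqP ->.
apply: eq_bigr => i _; rewrite big_ord1 subnn.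
by rewrite diffop_le0_mulE; [rewrite mulrC | have [] := a0 i].
Qed.

End DifferentialOperators.

Unset Implicit Arguments.

Theorem proposition2p1 (R : comAlgType CC) (A : (R -> R) -> Prop) :
  affine_domain R ->
  subalg_diffop A ->
  graded_cofinite A ->
  (* the base A /\ O(X) is a finitely generated C-algebra *)
  (exists S : seq R, (forall s, s \in S -> base A s) /\
     forall r, base A r -> in_gen_subalg S r) /\
  (* O(X) is a finitely generated module over the base *)
  (exists (n : nat) (t : 'I_n -> R), forall r : R,
     exists a : 'I_n -> R, (forall i, base A (a i)) /\ r = \sum_(i < n) a i * t i).
Proof.
move=> [_ _ [S0 S0_gen]] A_subalg A_cofinite.
have [n [t t_gen]] := graded_cofinite_fin_module A_cofinite.
split; last by exists n, t.
exact: artin_tate (base_subalg A_subalg) S0_gen t_gen.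
Qed.
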